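(* Let $G$ be a profinite group that is a Cartesian product of non-abelian finite simple groups. If every element of $G$ has a countable Engel sink, then $G$ is finite.
   Context: Commutators are left-normed, $[a,b]=a^{-1}b^{-1}ab$, and $[x,{}_n g]=[x,g,\dots,g]$ with $g$ repeated $n$ times. An Engel sink of an element $g$ of a group $G$ is a set $\mathscr E(g)\subseteq G$ such that for every $x\in G$ there is a positive integer $n(x,g)$ with $[x,{}_n g]\in\mathscr E(g)$ for all $n\ge n(x,g)$. ''Countable'' means finite or denumerable. *)

From Stdlib Require Import List.
From mathcomp Require Import all_boot all_fingroup all_solvable.
Set Implicit Arguments. Unset Strict Implicit. Unset Printing Implicit Defensive.
Local Open Scope group_scope.

Definition cart (I : Type) (S : I -> finGroupType) := forall i : I, S i.

Definition ccomm (I : Type) (S : I -> finGroupType) (x g : cart S) : cart S :=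
  fun i => [~ x i, g i].

Definition engel_comm (I : Type) (S : I -> finGroupType) (x g : cart S) (n : nat)
  : cart S := iter n (fun z => ccomm z g) x.

Definition engel_sink (I : Type) (S : I -> finGroupType) (g : cart S)
  (E : cart S -> Prop) : Prop :=
  forall x : cart S, exists n0 : nat, 0 < n0 /\
    forall n : nat, n0 <= n -> E (engel_comm x g n).

(* countable = finite or denumerable: injects into nat *)
Definition countable_set (T : Type) (E : T -> Prop) : Prop :=
  exists f : T -> nat, forall a b, E a -> E b -> f a = f b -> a = b.

Definition finite_type (T : Type) : Prop :=
  exists s : seq T, forall t : T, List.In t s.

From mathcomp Require Import all_boot all_fingroup all_solvable.
From mathcomp Require Import zify.
From Stdlib Require Import Classical FunctionalExtensionality Eqdep ClassicalEpsilon.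
Set Implicit Arguments. Unset Strict Implicit. Unset Printing Implicit Defensive.
Local Open Scope group_scope.

(* Zorn: a finite Engel group is nilpotent.  By induction all proper subgroups
   are nilpotent, and Baer-Suzuki puts every p-element u in O_p(G), since a
   proper <u, u^y> is nilpotent.  If G = <u, u^y> <> <u>, then u lies in a
   unique maximal subgroup M, and the last term z of [y, _k u] outside M
   satisfies u^z \in M, so z normalises M; then M is normal, which y forbids.
   Hence every factor S_i contains x_i, g_i with [x_i, _n g_i] <> 1 for all n.
   If the index set is infinite, it contains a copy of nat, and for J a set of
   naturals the element x_J, equal to x_i on the coordinates in J and to 1
   elsewhere, has [x_J, _n g] nontrivial exactly on those coordinates; so an
   Engel sink of g receives continuum many distinct elements. *)

Section FiniteEngel.
Variable gT : finGroupType.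
Implicit Types G H K M D : {group gT}.

Definition engel_commg (x g : gT) n := iter n (fun z => [~ z, g]) x.

Lemma engel_commg1 g n : engel_commg 1 g n = 1.
Proof. by elim: n => //= n IHn; rewrite [engel_commg _ _ _]IHn comm1g. Qed.

Lemma groupEngel G x g n : x \in G -> g \in G -> engel_commg x g n \in G.
Proof. by move=> Gx Gg; elim: n => //= n IHn; rewrite groupR. Qed.

Definition engel_group (G : {set gT}) :=
  {in G &, forall x g, exists n, engel_commg x g n = 1}.

Lemma maximal_sub_eq G M1 M2 :
  maximal M1 G -> maximal M2 G -> M1 \subset M2 -> M1 = M2.
Proof.
move=> /maxgroupP[_ maxM1] /maxgroupp M2G sM12.
by apply: val_inj; rewrite /= (maxM1 M2 M2G sM12).
Qed.

Lemma nilpotent_card_ltn_setI G M D K :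
  nilpotent M -> M \subset G -> D \proper M -> 'N_G(D) \subset K ->
  #|D| < #|M :&: K|.
Proof.
move=> nilM sMG ltDM sNK; apply: leq_trans (proper_card (nilpotent_proper_norm nilM ltDM)) _.
apply/subset_leq_card; rewrite subsetI subsetIl (subset_trans _ sNK) //.
exact: setSI.
Qed.

Section ConjugatePair.
Variables (G : {group gT}) (u y : gT).
Hypotheses (Gu : u \in G) (Gy : y \in G) (sG_uuy : G \subset <<[set u; u ^ y]>>).
Hypothesis nil_max : forall M, maximal M G -> nilpotent M.

Lemma conj_pair_sub H : u \in H -> y \in 'N(H) -> G \subset H.
Proof.
move=> Hu nHy; apply: subset_trans sG_uuy _.
by rewrite gen_subG subUset !sub1set Hu memJ_norm.
Qed.

Lemma norm_conj_pair_proper H : u \in H -> ~~ (G \subset H) -> 'N_G(H) \proper G.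
Proof.
move=> Hu nsGH; rewrite properEneq subsetIl andbT.
apply: contra nsGH => /eqP eqNG; apply: (conj_pair_sub Hu).
by move: Gy; rewrite -eqNG => /setIP[].
Qed.

Lemma uniq_maximal_conj_pair M1 M2 :
  maximal M1 G -> maximal M2 G -> u \in M1 -> u \in M2 -> M1 = M2.
Proof.
(* The normaliser of D = M1 :&: M2 lies in a maximal M3, which meets M1 and M2
   in more than D as normalisers grow in nilpotent groups. *)
have [n] := ubnP (#|G| - #|M1 :&: M2|); elim: n M1 M2 => // n IHn M1 M2 ltn.
move=> maxM1 maxM2 M1u M2u.
have [sM12|nsM12] := boolP (M1 \subset M2); first exact: maximal_sub_eq maxM1 maxM2 sM12.
have [sM21|nsM21] := boolP (M2 \subset M1); first by rewrite (maximal_sub_eq maxM2 maxM1 sM21).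
pose D := (M1 :&: M2)%G.
have sMG (Mi : {group gT}) : maximal Mi G -> Mi \subset G by case/maxgroupP=> /proper_sub.
have Du : u \in D by rewrite inE M1u.
have nsGD : ~~ (G \subset D).
  apply: (contraNN _ nsM12) => sGD.
  by rewrite (subset_trans (sMG _ maxM1)) // (subset_trans sGD) ?subsetIr.
have ltNG := norm_conj_pair_proper Du nsGD.
have [eqNG|[M3 maxM3 sNM3]] := maximal_exists (proper_sub ltNG).
  by rewrite eqNG properxx in ltNG.
have M3u : u \in M3 by rewrite (subsetP sNM3) // inE (subsetP (sMG _ maxM1)) // (subsetP (normG D)).
have eqM3 (Mi : {group gT}) : maximal Mi G -> D \proper Mi -> Mi = M3.
  move=> maxMi ltDMi.
  apply: (IHn Mi M3 _ maxMi maxM3 (subsetP (proper_sub ltDMi) u Du) M3u).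
  have : #|M1 :&: M2| < #|Mi :&: M3|.
    exact: nilpotent_card_ltn_setI (nil_max maxMi) (sMG _ maxMi) ltDMi sNM3.
  have : #|Mi :&: M3| <= #|G| by rewrite subset_leq_card // subIset // sMG.
  by move: ltn; clear; lia.
have ltDM1 : D \proper M1.
  by rewrite properEneq subsetIl andbT; apply: contraNneq nsM12 => <-; apply: subsetIr.
have ltDM2 : D \proper M2.
  by rewrite properEneq subsetIr andbT; apply: contraNneq nsM21 => <-; apply: subsetIl.
by rewrite (eqM3 M1 maxM1 ltDM1) (eqM3 M2 maxM2 ltDM2).
Qed.

Lemma engel_conj_pair_sub_cycle :
  (forall x, x \in G -> exists n, engel_commg x u n = 1) -> G \subset <[u]>.
Proof.
move=> engel_u; apply/idPn => nsGu.
have suG : <[u]>%G \subset G by rewrite cycle_subG.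
have [eqG|[M maxM suM]] := maximal_exists suG.
  by rewrite -eqG subxx in nsGu.
have /maxgroupP[ltMG maxMmax] := maxM.
have [sMG nsGM] := andP ltMG.
have Mu : u \in M by rewrite -cycle_subG.
have nMy : y \notin 'N(M) by apply: contra nsGM; apply: conj_pair_sub.
have My : y \notin M by apply: contra nMy; apply: (subsetP (normG M)).
have [n yn1] := engel_u y Gy.
pose P k := engel_commg y u k \in M.
have [|m Pm minm] := ex_minnP (ex_intro P n _); first by rewrite /P yn1 group1.
have m_gt0 : 0 < m by rewrite lt0n; apply: contraNneq My => m0; rewrite m0 in Pm.
have nPm1 : ~~ P m.-1 by apply/negP => /minm; rewrite leqNgt ltn_predL m_gt0.
(* z is the last term of the sequence outside M. *)
set z := engel_commg y u m.-1 in nPm1.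
have Mzu : [~ z, u] \in M by rewrite /P -(prednK m_gt0) in Pm.
have Mu_z : u ^ z \in M.
  have : u^-1 ^ z \in M by rewrite -(mulgK u (u^-1 ^ z)) -commgEr groupM ?groupV.
  by rewrite conjVg groupV.
have Gz : z \in G by apply: groupEngel.
have maxMz : maximal (M :^ z^-1)%G G by rewrite -[X in maximal _ X](conjGid (groupVr Gz)) maximalJ.
have Mz_u : u \in (M :^ z^-1)%G by rewrite /= mem_conjgV.
have eqMz := uniq_maximal_conj_pair maxMz maxM Mz_u Mu.
have Nz : z \in 'N_G(M) by rewrite in_setI Gz -groupV; apply/normP; have /= := congr1 (@gval gT) eqMz.
have sMN : M \subset 'N_G(M) by rewrite subsetI sMG normG.
have [ltNG|] := boolP ('N_G(M) \proper G).
  have eqNM : 'N_G(M) = M := maxMmax 'N_G(M)%G ltNG sMN.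
  by move: nPm1; rewrite /P -/z -eqNM Nz.
rewrite properEneq subsetIl andbT negbK => /eqP eqNG.
by move: Gy; rewrite -eqNG => /setIP[_ Ny]; rewrite Ny in nMy.
Qed.

End ConjugatePair.

Lemma nilpotent_pair_pgroup (p : nat) (u v : gT) :
  nilpotent <<[set u; v]>> -> p.-elt u -> p.-elt v -> p.-group <<[set u; v]>>.
Proof.
move=> nilH pu pv; apply: pgroupS _ (pcore_pgroup p <<[set u; v]>>).
have Op_p x : x \in <<[set u; v]>> -> p.-elt x -> x \in 'O_p(<<[set u; v]>>).
  by move=> Hx; rewrite (mem_normal_Hall (nilpotent_pcore_Hall p nilH) (pcore_normal p _)).
by rewrite gen_subG subUset !sub1set !Op_p // mem_gen // !inE eqxx ?orbT.
Qed.

Lemma pcore_p_elt_nilpotent G :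
  (forall (p : nat) u, u \in G -> p.-elt u -> u \in 'O_p(G)) -> nilpotent G.
Proof.
move=> OpG; apply: nilpotentS (Fitting_nil G).
rewrite -{1}(Sylow_gen G) gen_subG; apply/bigcupsP => P /SylowP[p _ sylP].
have sOpF : 'O_p(G) \subset 'F(G).
  by apply: Fitting_max; [apply: pcore_normal | apply: pgroup_nil (pcore_pgroup p G)].
apply: subset_trans sOpF; apply/subsetP => u Pu.
by apply: OpG; [apply: subsetP (pHall_sub sylP) u Pu | apply: mem_p_elt (pHall_pgroup sylP) Pu].
Qed.

Lemma minimal_engel_p_elt_pcore G (p : nat) (u : gT) :
  engel_group G -> (forall H, H \proper G -> nilpotent H) ->
  u \in G -> p.-elt u -> u \in 'O_p(G).
Proof.
move=> engelG nil_proper Gu pu; apply: (Baer_Suzuki Gu) => y Gy.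
have sHG : <<[set u; u ^ y]>> \subset G by rewrite gen_subG subUset !sub1set Gu groupJ.
have pu_y : p.-elt (u ^ y) by rewrite p_eltJ.
have [ltHG|] := boolP (<<[set u; u ^ y]>> \proper G).
  exact: nilpotent_pair_pgroup (nil_proper _ ltHG) pu pu_y.
rewrite properEneq sHG andbT negbK => /eqP eqHG.
have sGu : G \subset <[u]>.
  apply: (engel_conj_pair_sub_cycle Gu Gy); first by rewrite eqHG.
    by move=> M /maxgroupp; apply: nil_proper.
  by move=> x Gx; apply: engelG.
by rewrite eqHG; apply: pgroupS sGu pu.
Qed.

Theorem engel_nilpotent G : engel_group G -> nilpotent G.
Proof.
have [n] := ubnP #|G|; elim: n G => // n IHn G /ltnSE-leGn engelG.
have nil_proper H : H \proper G -> nilpotent H.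
  move=> ltHG; apply: IHn; first exact: leq_trans (proper_card ltHG) leGn.
  by move=> x g Hx Hg; apply: engelG; apply: (subsetP (proper_sub ltHG)).
apply: pcore_p_elt_nilpotent => p u.
exact: minimal_engel_p_elt_pcore engelG nil_proper.
Qed.

Lemma simple_nonabelian_not_engel :
  simple [set: gT] -> ~~ abelian [set: gT] ->
  exists x g : gT, forall n, engel_commg x g n != 1.
Proof.
move=> simpleT nabT; apply: NNPP => not_engel.
have engelT : engel_group [set: gT].
  move=> x g _ _; apply: NNPP => nx1; apply: not_engel; exists x, g => n.
  by apply/eqP => xn1; apply: nx1; exists n.
have solT := nilpotent_sol (engel_nilpotent engelT).
by rewrite cyclic_abelian ?prime_cyclic ?simple_sol_prime in nabT.
Qed.

End FiniteEngel.

Lemma In_mem (T : eqType) (x : T) (s : seq T) : x \in s -> List.In x s.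
Proof. by elim: s => //= a s IHs; rewrite in_cons => /orP[/eqP->|/IHs]; [left|right]. Qed.

Lemma finite_type_inj (T U : Type) (f : T -> U) (s : seq U) :
  (forall t t', f t = f t' -> t = t') -> (forall t, List.In (f t) s) -> finite_type T.
Proof.
move=> f_inj f_s.
pose preim (v : U) : seq T :=
  if excluded_middle_informative (exists t, f t = v) is left ex_t
  then [:: proj1_sig (constructive_indefinite_description _ ex_t)] else [::].
exists (List.flat_map preim s) => t; apply/List.in_flat_map; exists (f t); split => //.
rewrite /preim; case: excluded_middle_informative => [ex_t|]; last by case; exists t.
by case: constructive_indefinite_description => t' ft't; left; apply: f_inj.
Qed.

Section FiniteProduct.
Variables (I : Type) (S : I -> finGroupType).

Definition graph (s : seq I) (t : cart S) : seq {i : I & S i} :=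
  [seq existT _ i (t i) | i <- s].

Fixpoint graphs (s : seq I) : seq (seq {i : I & S i}) :=
  if s is i :: s' then
    List.flat_map (fun a : S i => [seq existT _ i a :: l | l <- graphs s']) (enum (S i))
  else [:: [::]].

Lemma graph_in_graphs s t : List.In (graph s t) (graphs s).
Proof.
elim: s => [|i s IHs] /=; first by left.
apply/List.in_flat_map; exists (t i); split; first by apply: In_mem; rewrite mem_enum.
exact: List.in_map.
Qed.

Lemma graph_inj s : (forall i, List.In i s) -> forall t t', graph s t = graph s t' -> t = t'.
Proof.
move=> s_I t t' /List.map_ext_in_iff eq_tt'; apply: functional_extensionality_dep => i.
exact: inj_pair2 (eq_tt' i (s_I i)).
Qed.

Lemma finite_cart (s : seq I) : (forall i, List.In i s) -> finite_type (cart S).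
Proof. by move=> s_I; apply: finite_type_inj (graph_inj s_I) (graph_in_graphs s). Qed.

End FiniteProduct.

Lemma infinite_inj_nat (T : Type) :
  ~ finite_type T -> exists e : nat -> T, forall m n, e m = e n -> m = n.
Proof.
move=> infT.
have fresh (s : seq T) : {t | ~ List.In t s}.
  apply: constructive_indefinite_description; apply: NNPP => all_in; apply: infT.
  by exists s => t; apply: NNPP => t_s; apply: all_in; exists t.
pose fix firsts n := if n is n'.+1 then proj1_sig (fresh (firsts n')) :: firsts n' else [::].
pose e n := proj1_sig (fresh (firsts n)).
have e_firsts m n : m < n -> List.In (e m) (firsts n).
  elim: n => // n IHn; rewrite ltnS leq_eqVlt => /orP[/eqP->|/IHn]; [left|right] => //.
have e_fresh n : ~ List.In (e n) (firsts n) := proj2_sig (fresh (firsts n)).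
exists e => m n e_mn; case: (ltngtP m n) => // [lt_mn|lt_nm].
  by case: (e_fresh n); rewrite -e_mn; apply: e_firsts.
by case: (e_fresh m); rewrite e_mn; apply: e_firsts.
Qed.

Lemma cantor_nat (F : (nat -> bool) -> nat) : ~ (forall J J', F J = F J' -> J =1 J').
Proof.
move=> F_inj.
pose D n := if excluded_middle_informative (exists J, F J = n /\ J n) then false else true.
have D_notin n : D n -> ~ (exists J, F J = n /\ J n) by rewrite /D; case: excluded_middle_informative.
have notin_D n : ~ (exists J, F J = n /\ J n) -> D n by rewrite /D; case: excluded_middle_informative.
have [DFD | nDFD] := boolP (D (F D)); first by apply: (D_notin _ DFD); exists D.
move/negP: (nDFD); apply; apply: notin_D => -[J [FJ JFD]].
by rewrite -(F_inj _ _ FJ (F D)) JFD in nDFD.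
Qed.

Lemma engel_comm_component (I : Type) (S : I -> finGroupType) (x g : cart S) n i :
  engel_comm x g n i = engel_commg (x i) (g i) n.
Proof. by elim: n => //= n IHn; rewrite /ccomm IHn. Qed.

Lemma cart_not_engel (I : Type) (S : I -> finGroupType) :
  (forall i, simple [set: S i]) -> (forall i, ~~ abelian [set: S i]) ->
  exists x g : cart S, forall i n, engel_commg (x i) (g i) n != 1.
Proof.
move=> simpleS nabS.
have xg i : {xg : S i * S i | forall n, engel_commg xg.1 xg.2 n != 1}.
  apply: constructive_indefinite_description.
  by have [x [g xg_engel]] := simple_nonabelian_not_engel (simpleS i) (nabS i); exists (x, g).
by exists (fun i => (sval (xg i)).1), (fun i => (sval (xg i)).2) => i; apply: svalP (xg i).
Qed.

Section InfiniteProduct.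
Variables (I : Type) (S : I -> finGroupType) (e : nat -> I) (x g : cart S).
Hypothesis e_inj : forall m n, e m = e n -> m = n.
Hypothesis xg_not_engel : forall i n, engel_commg (x i) (g i) n != 1.

Definition cart_mask (P : I -> Prop) : cart S :=
  fun i => if excluded_middle_informative (P i) then x i else 1.

Lemma engel_comm_mask_neq1 P n i : engel_comm (cart_mask P) g n i != 1 <-> P i.
Proof.
rewrite engel_comm_component /cart_mask; case: excluded_middle_informative => Pi.
  by split=> // _; apply: xg_not_engel.
by rewrite engel_commg1 eqxx.
Qed.

Lemma no_countable_engel_sink : ~ (exists E, engel_sink g E /\ countable_set E).
Proof.
case=> E [sinkE [f f_inj]].
pose P (J : nat -> bool) i := exists2 k, e k = i & J k.
have P_e J k : P J (e k) <-> J k by split=> [[k' /e_inj->]|]; last exists k.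
pose N J := proj1_sig (constructive_indefinite_description _ (sinkE (cart_mask (P J)))).
pose c J := engel_comm (cart_mask (P J)) g (N J).
have Ec J : E (c J).
  by rewrite /c /N; case: constructive_indefinite_description => n0 /= [_ En]; apply: En.
apply: (@cantor_nat (fun J => f (c J))) => J J' /(f_inj _ _ (Ec J) (Ec J')) eq_c k.
have Jk (K : nat -> bool) : K k <-> c K (e k) != 1 by rewrite engel_comm_mask_neq1 P_e.
apply/idP/idP => [/(Jk J).1 | /(Jk J').1].
  by rewrite eq_c => /(Jk J').2.
by rewrite -eq_c => /(Jk J).2.
Qed.

End InfiniteProduct.

Theorem lemma7p1 (I : Type) (S : I -> finGroupType)
  (hsimple : forall i : I, simple [set: S i])
  (hnonab : forall i : I, ~~ abelian [set: S i])
  (hsink : forall g : cart S, exists E : cart S -> Prop,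
      engel_sink g E /\ countable_set E) :
  finite_type (cart S).
Proof.
have [[s s_I]|infI] := classic (finite_type I); first exact: finite_cart s_I.
have [e e_inj] := infinite_inj_nat infI.
have [x [g xg_not_engel]] := cart_not_engel hsimple hnonab.
by case: (no_countable_engel_sink e_inj xg_not_engel (hsink g)).
Qed.
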